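(* Let $f=(f_1,\dots,f_m):\mathbb{R}^n\times\mathbb{R}^m\to\mathbb{R}^m$ be continuous, $R\subset\mathbb{R}^n$ a rectangle, $I=\prod_{i=1}^mI_i$ with compact intervals $I_i$, and $\phi$ a permutation of $\{1,\dots,m\}$. Suppose there are continuous functions $h_i:R\times I_1\times\cdots\times I_{i-1}\to I_i$ ($i=1,\dots,m$) with the following property: for each $i$ and each $(x,y_1,\dots,y_{i-1})\in R\times I_1\times\cdots\times I_{i-1}$, the value $y_i=h_i(x,y_1,\dots,y_{i-1})$ is the unique $y_i\in I_i$ such that $f_{\phi(i)}(x,Y_1,\dots,Y_m)=0$, where $Y_k=y_k$ for $k\le i$ and $Y_k=h_k(x,Y_1,\dots,Y_{k-1})$ for $k=i+1,\dots,m$. Then for every $x\in R$ there is a unique $y\in I$ with $f(x,y)=0$, and the resulting function $g=(g_1,\dots,g_m):R\to I$ is continuous and given by $$g_1(x)=h_1(x),\quad g_2(x)=h_2(x,g_1(x)),\quad\dots,\quad g_m(x)=h_m(x,g_1(x),\dots,g_{m-1}(x)).$$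
   Context: A rectangle in $\mathbb{R}^n$ is a Cartesian product of $n$ compact intervals. (In the paper, such $h_i$ arise from Assumption 2: for each $i$, the map $y_i\mapsto\operatorname{sign}f_{\phi(i)}(x,Y_1,\dots,Y_m)$ has exactly one jump discontinuity on $I_i$, where $\operatorname{sign}(t)=1$ for $t\ge0$ and $-1$ otherwise.) *)

From HB Require Import structures.
From mathcomp Require Import all_boot all_order all_algebra.
From mathcomp Require Import all_classical all_reals all_analysis.
From mathcomp Require Import perm.
Set Implicit Arguments. Unset Strict Implicit. Unset Printing Implicit Defensive.
Import Order.TTheory GRing.Theory Num.Theory.
Import numFieldNormedType.Exports.
Local Open Scope classical_set_scope.
Local Open Scope ring_scope.

Definition box (R : realType) (k : nat) (a b : 'rV[R]_k) : set 'rV[R]_k :=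
  [set x | forall j : 'I_k, a 0 j <= x 0 j <= b 0 j].

Definition pre (R : realType) (m : nat) (i : 'I_m) (y : 'rV[R]_m) : 'rV[R]_i :=
  \row_(j < i) y 0 (widen_ord (ltnW (ltn_ord i)) j).

Set Implicit Arguments. Unset Strict Implicit. Unset Printing Implicit Defensive.
From HB Require Import structures.
From mathcomp Require Import all_boot all_order all_algebra.
From mathcomp Require Import all_classical all_reals all_analysis.
From mathcomp Require Import perm zify.
Import Order.TTheory GRing.Theory Num.Theory.
Import numFieldNormedType.Exports.
Local Open Scope classical_set_scope.
Local Open Scope ring_scope.

(* The triangular system y_i = h_i(x, y_1, ..., y_{i-1}) has exactly one
   solution, obtained by forward substitution, and it depends continuously on
   x since each h_i does.  This solution is a zero of f: at every i the later
   coordinates are given by the h_k, so the uniqueness property at i says that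
   f_{phi(i)} vanishes.  Conversely, a zero y of f in I solves the triangular
   system, by downward induction on i: once y_k = h_k(x, y_1, ..., y_{k-1})
   for all k > i, the uniqueness property at i forces y_i = h_i(...). *)

Lemma ord_ltn_ind (m : nat) (P : 'I_m -> Prop) :
  (forall i : 'I_m, (forall j : 'I_m, (j < i)%N -> P j) -> P i) -> forall i, P i.
Proof.
move=> IH i; have : forall k (i : 'I_m), val i = k -> P i; last exact.
elim/ltn_ind => k IHk {}i ik; apply: IH => j ji.
by apply: (IHk j) => //; rewrite -ik.
Qed.

Lemma ord_gtn_ind (m : nat) (P : 'I_m -> Prop) :
  (forall i : 'I_m, (forall j : 'I_m, (i < j)%N -> P j) -> P i) -> forall i, P i.
Proof.
move=> IH i; rewrite -(rev_ordK i).
elim/ord_ltn_ind: (rev_ord i) => k IHk; apply: IH => j kj.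
rewrite -(rev_ordK j); apply: IHk; move: kj (ltn_ord j) (ltn_ord k) => /=; lia.
Qed.

Lemma pre_mxE (R : realType) (m : nat) (i : 'I_m) (y : 'rV[R]_m) (j : 'I_i) :
  pre i y 0 j = y 0 (widen_ord (ltnW (ltn_ord i)) j).
Proof. by rewrite mxE. Qed.

Lemma eq_pre (R : realType) (m : nat) (i : 'I_m) (y z : 'rV[R]_m) :
  (forall j : 'I_m, (j < i)%N -> y 0 j = z 0 j) -> pre i y = pre i z.
Proof. by move=> yz; apply/rowP => j; rewrite !pre_mxE yz //=; apply: ltn_ord. Qed.

Lemma pre_box (R : realType) (m : nat) (i : 'I_m) (c d y : 'rV[R]_m) :
  box c d y -> box (pre i c) (pre i d) (pre i y).
Proof. by move=> cyd j; rewrite !pre_mxE. Qed.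

Lemma cvg_row (R : realType) (k : nat) (T : Type) (F : set_system T)
  (FF : Filter F) (u : T -> 'rV[R]_k) (l : 'rV[R]_k) :
  (forall j, (fun t => u t 0 j) @ F --> l 0 j) -> u @ F --> l.
Proof.
move=> ul; apply/cvg_mx_entourageP => E entE.
suff : \forall t \near F, forall i j, (l i j, u t i j) \in E by [].
apply: (@filter_forall _ _ (fun i t => forall j, (l i j, u t i j) \in E) F FF) => i.
apply: (@filter_forall _ _ (fun j t => (l i j, u t i j) \in E) F FF) => j.
rewrite (ord1 i); have /cvg_entourageP/(_ E entE) := ul j.
by apply: (@filterS _ F) => t Et; apply/mem_set.
Qed.

Lemma within_continuous_comp_within {T U V : topologicalType}
  (A : set T) (B : set U) (f : T -> U) (g : U -> V) :
  (forall t, A t -> B (f t)) ->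
  {within A, continuous f} -> {within B, continuous g} ->
  {within A, continuous (g \o f)}.
Proof.
move=> fAB /subspace_continuousP cf /subspace_continuousP cg.
apply/subspace_continuousP => t At.
apply: (@cvg_trans _ (g @ within B (nbhs (f t)))); last exact: cg (fAB _ At).
move=> W /= gW; have {gW} : within B (nbhs (f t)) (g @^-1` W) by exact: gW.
rewrite {1}/within /= => /(cf _ At); rewrite !nbhs_simpl /= /within /=.
apply: (@filterS _ (nbhs t)) => s + As.
by move/(_ As); apply; apply: fAB.
Qed.

Section TriangularSystem.
Variables (R : realType) (n m : nat).
Variable h : forall i : 'I_m, 'rV[R]_n -> 'rV[R]_i -> R.
Arguments h : clear implicits.

(* [fill x k] has its first k coordinates computed by forward substitution
   and zeros afterwards. *)
Fixpoint fill (x : 'rV[R]_n) (k : nat) : 'rV[R]_m :=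
  if k is k.+1 then
    \row_j (if val j == k then h j x (pre j (fill x k)) else fill x k 0 j)
  else 0.

Definition triangular_solution (x : 'rV[R]_n) : 'rV[R]_m := fill x m.

Lemma fill_stable x (j : 'I_m) k k' :
  (j < k)%N -> (k <= k')%N -> fill x k' 0 j = fill x k 0 j.
Proof.
move=> jk; elim: k' => [|k' IH]; first by rewrite leqn0 => /eqP ->.
rewrite leq_eqVlt ltnS => /orP[/eqP -> // | kk'].
rewrite /= mxE ifN_eq ?IH //; apply: contraTneq kk' => <-.
by rewrite -ltnNge.
Qed.

Lemma triangular_solutionE x (i : 'I_m) :
  triangular_solution x 0 i = h i x (pre i (triangular_solution x)).
Proof.
rewrite /triangular_solution (@fill_stable _ _ (val i).+1) //; last exact: ltn_ord.
rewrite /= mxE eqxx; congr h; apply: eq_pre => j ji.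
by rewrite [RHS](@fill_stable _ _ i) //; apply: ltnW (ltn_ord i).
Qed.

Lemma triangular_solution_unique x (y : 'rV[R]_m) :
  (forall i, y 0 i = h i x (pre i y)) -> y = triangular_solution x.
Proof.
move=> yE; apply/rowP; elim/ord_ltn_ind => i IH.
by rewrite yE triangular_solutionE; congr h; apply: eq_pre.
Qed.

Variables (A : set 'rV[R]_n) (c d : 'rV[R]_m).
Hypothesis h_box : forall (i : 'I_m) x (yp : 'rV[R]_i),
  A x -> box (pre i c) (pre i d) yp -> c 0 i <= h i x yp <= d 0 i.

Lemma triangular_solution_box x : A x -> box c d (triangular_solution x).
Proof.
move=> Ax; elim/ord_ltn_ind => i IH.
rewrite triangular_solutionE; apply: h_box => // j; rewrite !pre_mxE.
apply: IH; exact: (ltn_ord j).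
Qed.

Hypothesis h_cont : forall i : 'I_m,
  {within [set p : 'rV[R]_n * 'rV[R]_i | A p.1 /\ box (pre i c) (pre i d) p.2],
   continuous (fun p : 'rV[R]_n * 'rV[R]_i => h i p.1 p.2)}.

Lemma triangular_solution_continuous : {within A, continuous triangular_solution}.
Proof.
suff coord_cont i : {within A, continuous (fun x => triangular_solution x 0 i)}.
  apply/subspace_continuousP => x Ax; apply: cvg_row => i.
  by have /subspace_continuousP := coord_cont i; apply.
elim/ord_ltn_ind: i => i IH.
have pre_cont : {within A, continuous (fun x => (x, pre i (triangular_solution x)))}.
  apply/subspace_continuousP => x Ax.
  have x_cvg : (fun t => t) @ within A (nbhs x) --> x by exact: cvg_within.
  suff pre_cvg : (fun t => pre i (triangular_solution t)) @ within A (nbhs x)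
                   --> pre i (triangular_solution x) by exact: (cvg_pair x_cvg pre_cvg).
  apply: cvg_row => j; rewrite pre_mxE.
  have /funext -> : (fun t => pre i (triangular_solution t) 0 j)
      =1 (fun t => triangular_solution t 0 (widen_ord (ltnW (ltn_ord i)) j)).
    by move=> t; rewrite pre_mxE.
  by have /subspace_continuousP := IH (widen_ord (ltnW (ltn_ord i)) j) (ltn_ord j); apply.
have := within_continuous_comp_within _ pre_cont (@h_cont i).
under [fun x => triangular_solution x 0 i]eq_fun do rewrite triangular_solutionE.
apply => x Ax; split => //; exact/pre_box/triangular_solution_box.
Qed.

End TriangularSystem.

Section ZerosOfF.
Variables (R : realType) (n m : nat) (f : 'rV[R]_n -> 'rV[R]_m -> 'rV[R]_m).
Variables (phi : 'S_m) (h : forall i : 'I_m, 'rV[R]_n -> 'rV[R]_i -> R).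
Arguments h : clear implicits.
Variables (A : set 'rV[R]_n) (c d : 'rV[R]_m).
Hypothesis h_unique : forall (i : 'I_m) (x : 'rV[R]_n) (yp : 'rV[R]_i),
  A x -> box (pre i c) (pre i d) yp ->
  forall t : R, c 0 i <= t <= d 0 i ->
  forall Y : 'rV[R]_m,
    pre i Y = yp -> Y 0 i = t ->
    (forall k : 'I_m, (i < k)%N -> Y 0 k = h k x (pre k Y)) ->
    (f x Y 0 (phi i) = 0 <-> t = h i x yp).

Lemma triangular_solution_root x : A x ->
  box c d (triangular_solution h x) -> f x (triangular_solution h x) = 0.
Proof.
move=> Ax y_box; apply/rowP => k; rewrite [RHS]mxE -(permKV phi k).
set y := triangular_solution h x; set i := (phi^-1)%g k.
have y_later (k' : 'I_m) : (i < k')%N -> y 0 k' = h k' x (pre k' y).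
  by move=> _; apply: triangular_solutionE.
have [_] := h_unique Ax (pre_box (i := i) y_box) (y_box i) erefl erefl y_later.
by apply; apply: triangular_solutionE.
Qed.

Lemma root_triangular x (y : 'rV[R]_m) : A x -> box c d y -> f x y = 0 ->
  y = triangular_solution h x.
Proof.
move=> Ax y_box fy; apply: triangular_solution_unique.
elim/ord_gtn_ind => i IH.
have [+ _] := h_unique Ax (pre_box (i := i) y_box) (y_box i) erefl erefl IH.
by apply; rewrite fy mxE.
Qed.

End ZerosOfF.

Theorem lemma5p1 (R : realType) (n m : nat)
  (f : 'rV[R]_n -> 'rV[R]_m -> 'rV[R]_m)
  (a b : 'rV[R]_n) (c d : 'rV[R]_m) (phi : 'S_m)
  (h : forall i : 'I_m, 'rV[R]_n -> 'rV[R]_i -> R) :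
  continuous (fun p : 'rV[R]_n * 'rV[R]_m => f p.1 p.2) ->
  (forall j : 'I_n, a 0 j <= b 0 j) ->
  (forall j : 'I_m, c 0 j <= d 0 j) ->
  (forall (i : 'I_m) (x : 'rV[R]_n) (yp : 'rV[R]_i),
     box a b x -> box (pre i c) (pre i d) yp -> c 0 i <= h i x yp <= d 0 i) ->
  (forall i : 'I_m,
     {within [set p : 'rV[R]_n * 'rV[R]_i | box a b p.1 /\ box (pre i c) (pre i d) p.2],
      continuous (fun p : 'rV[R]_n * 'rV[R]_i => h i p.1 p.2)}) ->
  (forall (i : 'I_m) (x : 'rV[R]_n) (yp : 'rV[R]_i),
     box a b x -> box (pre i c) (pre i d) yp ->
     forall t : R, c 0 i <= t <= d 0 i ->
     forall Y : 'rV[R]_m,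
       pre i Y = yp -> Y 0 i = t ->
       (forall k : 'I_m, (i < k)%N -> Y 0 k = h k x (pre k Y)) ->
       (f x Y 0 (phi i) = 0 <-> t = h i x yp)) ->
  exists g : 'rV[R]_n -> 'rV[R]_m,
    (forall x, box a b x ->
       [/\ box c d (g x), f x (g x) = 0 &
           forall y, box c d y -> f x y = 0 -> y = g x]) /\
    {within box a b, continuous g} /\
    (forall x, box a b x -> forall i : 'I_m, g x 0 i = h i x (pre i (g x))).
Proof.
move=> _ _ _ h_box h_cont h_unique.
exists (triangular_solution h); split; [|split].
- move=> x ab_x; have g_box := triangular_solution_box h_box ab_x.
  split=> //; first exact: (triangular_solution_root (A := box a b) h_unique ab_x g_box).
  by move=> y; apply: (root_triangular (A := box a b) h_unique ab_x).
- exact: triangular_solution_continuous h_box h_cont.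
- by move=> x _ i; apply: triangular_solutionE.
Qed.
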